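(* Consider the problem $F^*:=\min_{x\in\mathbb{R}^n} F(x)=\frac1{\ell}\sum_{i=1}^{\ell}f_i(x)+\psi(x)$ s.t. $a_i(x)\le0$, $i=1,\dots,m$, under the standing assumptions in the context, and let $\bar\xi:=\inf_{\lambda^*\in\Lambda^*}\|\lambda^*\|_\infty$. For every $\delta\ge0$ and $\xi>\bar\xi$, a minimizer $x^*_{\xi,\delta}$ of $F_{\xi,\delta}$ satisfies \[-\xi\|\bar A(x^*_{\xi,\delta})\|_1\le F(x^*_{\xi,\delta})-F^*\le m\xi\delta\log2.\] Furthermore, if $\mu>0$, the same inequalities hold also for $\xi=\bar\xi$.
   Context: Standing assumptions: (i) $F$ is $\mu$-strongly convex for some $\mu\ge0$; (ii) each $f_i$ is convex and $L_f$-smooth; (iii) $\psi$ is closed and convex; (iv) each $a_i$ is convex and $L_a$-smooth; (v) (Slater) there exist $s>0$, $\hat x$ with $a_i(\hat x)\le -s$ for all $i$; (vi) there exist $C_0>0$, $C_1\ge0$ with $\|\nabla a_i(x)\|_2^2\le C_0+C_1|a_i(x)|$ for all $x$, $i$. $\Lambda^*$ is the set of optimal dual solutions (KKT multiplier vectors) of the constrained problem. Softplus: $p_\delta(t)=\delta\log(1+\exp(t/\delta))$ for $\delta>0$, $p_0(t)=\max(0,t)$. Penalty reformulation: $F_{\xi,\delta}(x)=F(x)+\xi\sum_{i=1}^m p_\delta(a_i(x))$. $\bar A(x)=(\max(0,a_1(x)),\dots,\max(0,a_m(x)))^T$. *)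

From mathcomp Require Import all_boot all_order all_algebra.
From mathcomp Require Import all_classical all_reals all_analysis.
Set Implicit Arguments. Unset Strict Implicit. Unset Printing Implicit Defensive.
Import Order.TTheory GRing.Theory Num.Theory.
Import numFieldNormedType.Exports.
Local Open Scope classical_set_scope.
Local Open Scope ring_scope.

Section Defs.
Variable R : realType.

Definition dotv (k : nat) (u v : 'rV[R]_k) : R := \sum_(i < k) u 0 i * v 0 i.
Definition norm2 (k : nat) (u : 'rV[R]_k) : R := Num.sqrt (dotv u u).
Definition norm1 (k : nat) (u : 'rV[R]_k) : R := \sum_(i < k) `|u 0 i|.
Definition norminf (k : nat) (u : 'rV[R]_k) : R :=
  \big[Num.max/0]_(i < k) `|u 0 i|.

Variable n : nat.

Definition convex_fun (g : 'rV[R]_n -> R) : Prop :=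
  forall (x y : 'rV[R]_n) (t : R), 0 <= t <= 1 ->
    g (t *: x + (1 - t) *: y) <= t * g x + (1 - t) * g y.

Definition strongly_convex_e (mu : R) (G : 'rV[R]_n -> \bar R) : Prop :=
  forall (x y : 'rV[R]_n) (t : R), 0 < t < 1 ->
    (G (t *: x + (1 - t) *: y)%R <=
     t%:E * G x + (1 - t)%:E * G y
     - (mu / 2 * t * (1 - t) * norm2 (x - y) ^+ 2)%:E)%E.

Definition convex_e (G : 'rV[R]_n -> \bar R) : Prop := strongly_convex_e 0 G.

Definition proper_e (G : 'rV[R]_n -> \bar R) : Prop :=
  (forall x, G x != -oo%E) /\ exists x, (G x < +oo)%E.

Definition has_gradient (h : 'rV[R]_n -> R) (g : 'rV[R]_n -> 'rV[R]_n) : Prop :=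
  forall x, differentiable h x /\ forall v, 'd h x v = dotv (g x) v.

Definition lipschitz_grad (L : R) (g : 'rV[R]_n -> 'rV[R]_n) : Prop :=
  forall x y, norm2 (g x - g y) <= L * norm2 (x - y).

Definition softplus (delta t : R) : R :=
  if delta == 0 then Num.max 0 t else delta * ln (1 + expR (t / delta)).

Variables (l m : nat).

Definition Fobj (f : 'I_l -> 'rV[R]_n -> R) (psi : 'rV[R]_n -> \bar R)
  (x : 'rV[R]_n) : \bar R :=
  (((l%:R)^-1 * \sum_(i < l) f i x)%:E + psi x)%E.

Definition Fpen (f : 'I_l -> 'rV[R]_n -> R) (psi : 'rV[R]_n -> \bar R)
  (a : 'I_m -> 'rV[R]_n -> R) (xi delta : R) (x : 'rV[R]_n) : \bar R :=
  (Fobj f psi x + (xi * \sum_(i < m) softplus delta (a i x))%:E)%E.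

Definition feasible (a : 'I_m -> 'rV[R]_n -> R) : set 'rV[R]_n :=
  [set x | forall i, a i x <= 0].

Definition Fstar f psi a : \bar R := ereal_inf [set Fobj f psi x | x in feasible a].

Definition Abar (a : 'I_m -> 'rV[R]_n -> R) (x : 'rV[R]_n) : 'rV[R]_m :=
  \row_(i < m) Num.max 0 (a i x).

Definition dualfun f psi (a : 'I_m -> 'rV[R]_n -> R) (lam : 'rV[R]_m) : \bar R :=
  ereal_inf (range (fun x => (Fobj f psi x + (\sum_(i < m) lam 0 i * a i x)%:E)%E)).

Definition nonneg_vec (lam : 'rV[R]_m) : Prop := forall i, 0 <= lam 0 i.

Definition dual_opt f psi a : set 'rV[R]_m :=
  [set lam | nonneg_vec lam /\
     forall lam', nonneg_vec lam' -> (dualfun f psi a lam' <= dualfun f psi a lam)%E].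

(* xi_bar = inf_{lam in Lambda^*} ||lam||_inf  (+oo if Lambda^* is empty) *)
Definition xibar f psi a : \bar R :=
  ereal_inf [set (norminf lam)%:E | lam in dual_opt f psi a].

End Defs.

From mathcomp Require Import all_boot all_order all_algebra.
From mathcomp Require Import all_classical all_reals all_analysis.
From mathcomp Require Import ring lra.
Set Implicit Arguments. Unset Strict Implicit. Unset Printing Implicit Defensive.
Import Order.TTheory GRing.Theory Num.Theory.
Import numFieldNormedType.Exports.
Local Open Scope classical_set_scope.
Local Open Scope ring_scope.

(* Upper bound: every softplus term is nonnegative and at most delta log 2 at a
   feasible point, so comparing the penalized minimizer xstar with a feasible y
   gives F xstar <= F y + m xi delta log 2.
   Lower bound: by Slater's condition some multiplier lam >= 0 has dual value
   d lam >= Fstar.  Hence every dual optimal L satisfies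
   Fstar <= d L <= F xstar + sum_i L_i a_i xstar <= F xstar + |L|_oo |Abar xstar|_1,
   and |L|_oo can be taken arbitrarily close to xi >= xibar.
   The multiplier is built one constraint at a time: the perturbation function
   v u = inf {F x | a x <= u} is convex, so in each new coordinate its left
   difference quotients at 0 lie below its right ones and their supremum is a
   valid slope; the Slater point keeps both families nonempty. *)

Section SlaterMultiplier.
Variables (R : realType) (V : lmodType R) (m : nat).
Variables (D : set V) (F : V -> R) (a : 'I_m -> V -> R) (p : R) (xh : V).
Hypothesis D_convex : forall x y t, D x -> D y -> 0 < t < 1 ->
  D (t *: x + (1 - t) *: y).
Hypothesis F_convex : forall x y t, D x -> D y -> 0 < t < 1 ->
  F (t *: x + (1 - t) *: y) <= t * F x + (1 - t) * F y.
Hypothesis a_convex : forall i x y t, 0 < t < 1 ->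
  a i (t *: x + (1 - t) *: y) <= t * a i x + (1 - t) * a i y.
Hypothesis D_xh : D xh.
Hypothesis slater_xh : forall i, a i xh < 0.
Hypothesis p_le_F : forall x, D x -> (forall i, a i x <= 0) -> p <= F x.

Definition vanish_from (k : nat) (u : 'I_m -> R) :=
  forall i : 'I_m, (k <= i)%N -> u i = 0.

(* [u |-> p + c.u] minorizes the perturbation function
   [v u = inf {F x | D x, a x <= u}] on the perturbations supported below [k]. *)
Definition value_minorant (k : nat) (c : 'I_m -> R) :=
  forall x u, D x -> vanish_from k u -> (forall i, a i x <= u i) ->
  p + \sum_i c i * u i <= F x.

(* Convexity of [v] along coordinate [j]: left difference quotients lie below
   right ones. *)
Lemma value_minorant_slope (j : 'I_m) c x y wx wy tx ty :
  value_minorant j c -> D x -> D y -> vanish_from j wx -> vanish_from j wy ->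
  ty < 0 < tx ->
  (forall i, a i x <= wx i + (i == j)%:R * tx) ->
  (forall i, a i y <= wy i + (i == j)%:R * ty) ->
  (F y - p - \sum_i c i * wy i) / ty <= (F x - p - \sum_i c i * wx i) / tx.
Proof.
move=> cj Dx Dy wx0 wy0 /andP[ty0 tx0] ax ay.
have d0 : tx - ty != 0 by rewrite lt0r_neq0 // subr_gt0 (lt_trans ty0).
pose th : R := - ty / (tx - ty).
have th1 : 1 - th = tx / (tx - ty) by rewrite /th; field.
have th01 : 0 < th < 1.
  have d_gt0 : 0 < tx - ty by rewrite subr_gt0 (lt_trans ty0).
  apply/andP; split; first by rewrite divr_gt0 // oppr_gt0.
  by rewrite -subr_gt0 th1 divr_gt0.
have balance : th * tx + (1 - th) * ty = 0 by rewrite th1 /th; field.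
pose w i : R := th * wx i + (1 - th) * wy i.
have : p + \sum_i c i * w i <= F (th *: x + (1 - th) *: y).
  apply: cj => [|i ji|i]; first exact: D_convex.
    by rewrite /w wx0 // wy0 // !mulr0 addr0.
  apply: le_trans (a_convex i x y th01) _.
  have [th0 th_1] := andP th01.
  apply: le_trans (_ : th * (wx i + (i == j)%:R * tx)
                        + (1 - th) * (wy i + (i == j)%:R * ty) <= _).
    by rewrite lerD // ler_wpM2l // ?ax ?ay ?subr_ge0 ltW.
  have -> : th * (wx i + (i == j)%:R * tx) + (1 - th) * (wy i + (i == j)%:R * ty)
           = w i + (i == j)%:R * (th * tx + (1 - th) * ty) by rewrite /w; ring.
  by rewrite balance mulr0 addr0.
have -> : \sum_i c i * w i = th * \sum_i c i * wx i + (1 - th) * \sum_i c i * wy i.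
  by rewrite !mulr_sumr -big_split /=; apply: eq_bigr => i _; rewrite /w; ring.
move=> h; have {h} := le_trans h (F_convex Dx Dy th01).
set X := F x - p - _; set Y := F y - p - _.
rewrite th1 /th -subr_ge0.
have -> : - ty / (tx - ty) * F x + tx / (tx - ty) * F y -
   (p + (- ty / (tx - ty) * \sum_i c i * wx i + tx / (tx - ty) * \sum_i c i * wy i))
   = (- ty * X + tx * Y) / (tx - ty) by rewrite /X /Y; field.
rewrite pmulr_lge0 ?invr_gt0 ?subr_gt0 ?(lt_trans ty0) // => convex_comb.
rewrite -subr_ge0 (_ : X / tx - Y / ty = (- ty * X + tx * Y) / (- ty * tx)).
  by rewrite divr_ge0 // ltW // mulr_gt0 // oppr_gt0.
by field; rewrite lt0r_neq0 ?ltr0_neq0.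
Qed.

Lemma value_minorantS (j : 'I_m) c :
  value_minorant j c -> exists c', value_minorant j.+1 c'.
Proof.
move=> cj.
pose q x w t := (F x - p - \sum_i c i * w i) / t.
pose left_quot := [set r | exists y w t, [/\ D y, vanish_from j w, t < 0,
  forall i, a i y <= w i + (i == j)%:R * t & r = q y w t]].
have right_quot_ub x w t : D x -> vanish_from j w -> 0 < t ->
    (forall i, a i x <= w i + (i == j)%:R * t) -> ubound left_quot (q x w t).
  move=> Dx w0 t0 ax _ [y [w' [t' [Dy w'0 t'0 ay ->]]]].
  by rewrite /q; apply: (@value_minorant_slope j c) => //; rewrite t'0.
have left_quot_xh : left_quot (q xh (fun=> 0) (a j xh)).
  exists xh, (fun=> 0), (a j xh); split => // i.
  by case: eqVneq => [->|_]; rewrite /= add0r ?mul1r ?mul0r // ltW.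
have left_quot_sup : has_sup left_quot.
  split; first by exists (q xh (fun=> 0) (a j xh)).
  exists (q xh (fun=> 0) 1); apply: right_quot_ub => // i.
  by rewrite add0r mulr1 (le_trans (ltW (slater_xh i))).
exists (fun i => if i == j then sup left_quot else c i) => x u Dx u0 axu.
pose w i := u i - (i == j)%:R * u j.
have w0 : vanish_from j w.
  move=> i ji; rewrite /w; case: eqVneq => [->|]; first by rewrite mul1r subrr.
  by move=> ij; rewrite mul0r subr0 u0 // ltn_neqAle ji andbT eq_sym.
have axw i : a i x <= w i + (i == j)%:R * u j by rewrite /w subrK.
have -> : \sum_i (if i == j then sup left_quot else c i) * u i
          = \sum_i c i * w i + sup left_quot * u j.
  rewrite (bigD1 j) //= eqxx addrC [X in _ = X + _](bigD1 j) //= /w eqxx.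
  rewrite mul1r subrr mulr0 add0r; congr (_ + _).
  by apply: eq_bigr => i /negbTE ij; rewrite ij mul0r subr0.
case: (ltgtP (u j) 0) => uj.
- have : q x w (u j) <= sup left_quot.
    by apply: sup_upper_bound => //; exists x, w, (u j).
  by rewrite ler_ndivrMr //; lra.
- have : sup left_quot <= q x w (u j).
    by apply: ge_sup; [exists (q xh (fun=> 0) (a j xh)) | exact: right_quot_ub].
  by rewrite ler_pdivlMr //; lra.
- rewrite uj mulr0 addr0; apply: cj => // i.
  by rewrite (le_trans (axw i)) // uj mulr0 addr0.
Qed.

Lemma value_minorant_exists : exists c, value_minorant m c.
Proof.
suff minorant_le k : (k <= m)%N -> exists c, value_minorant k c by exact: minorant_le.
elim: k => [_ | k IH km].
  exists (fun=> 0) => x u Dx u0 axu; rewrite big1 ?addr0 => [|i _]; last exact: mul0r.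
  by apply: p_le_F => // i; rewrite -(u0 i).
have [c ck] := IH (ltnW km).
exact: (@value_minorantS (Ordinal km) c).
Qed.

Lemma value_minorant_le0 c : value_minorant m c -> forall j, c j <= 0.
Proof.
move=> cm j; rewrite leNgt; apply/negP => cj0.
pose K := F xh - p - \sum_i c i * a i xh.
pose d := (`|K| + 1) / c j.
have : p + \sum_i c i * (a i xh + (i == j)%:R * d) <= F xh.
  apply: cm => // [i|i]; first by rewrite leqNgt ltn_ord.
  by rewrite lerDl mulr_ge0 // divr_ge0 ?addr_ge0 // ltW.
have -> : \sum_i c i * (a i xh + (i == j)%:R * d) = \sum_i c i * a i xh + (`|K| + 1).
  rewrite -(divfK (lt0r_neq0 cj0) (`|K| + 1)) -/d.
  under eq_bigr do rewrite mulrDr; rewrite big_split /=; congr (_ + _).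
  rewrite (bigD1 j) //= eqxx mul1r big1 ?addr0 ?[d * _]mulrC // => i /negbTE ->.
  by rewrite mul0r mulr0.
have := ler_norm K; rewrite /K; lra.
Qed.

Theorem slater_multiplier : exists2 lam : 'I_m -> R,
  forall i, 0 <= lam i & forall x, D x -> p <= F x + \sum_i lam i * a i x.
Proof.
have [c cm] := value_minorant_exists.
exists (fun i => - c i) => [i | x Dx]; first by rewrite oppr_ge0 value_minorant_le0.
have : p + \sum_i c i * a i x <= F x.
  by apply: cm => // i; rewrite leqNgt ltn_ord.
rewrite (eq_bigr _ (fun i _ => mulNr _ _)) sumrN; lra.
Qed.

End SlaterMultiplier.

Lemma strongly_convex_e_le (R : realType) (n : nat) (mu : R) (G : 'rV[R]_n -> \bar R)
    x y t :
  0 <= mu -> strongly_convex_e mu G -> G x \is a fin_num -> G y \is a fin_num ->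
  0 < t < 1 ->
  (G (t *: x + (1 - t) *: y)%R <= (t * fine (G x) + (1 - t) * fine (G y))%:E)%E.
Proof.
move=> mu0 Gsc Gx Gy t01; apply: le_trans (Gsc x y t t01) _.
have [t0 t1] := andP t01.
rewrite -{1}(fineK Gx) -{1}(fineK Gy) -!EFinM -EFinD lee_fin lerBlDr lerDl.
rewrite mulr_ge0 ?sqr_ge0 // mulr_ge0 ?subr_ge0 ?(ltW t1) //.
by rewrite mulr_ge0 ?(ltW t0) // divr_ge0.
Qed.

Lemma softplus_ge0 (R : realType) (delta t : R) : 0 <= delta -> 0 <= softplus delta t.
Proof.
move=> delta0; rewrite /softplus; case: eqP => _; first by rewrite le_max lexx.
by rewrite mulr_ge0 // ln_ge0 // lerDl expR_ge0.
Qed.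

Lemma softplus_le_ln2 (R : realType) (delta t : R) :
  0 <= delta -> t <= 0 -> softplus delta t <= delta * ln 2.
Proof.
move=> delta0 t0; rewrite /softplus; case: eqP => [->|_].
  by rewrite mul0r ge_max lexx t0.
rewrite ler_wpM2l // ler_ln ?posrE ?addr_gt0 ?expR_gt0 //.
have : expR (t / delta) <= 1 by rewrite expR_le1 mulr_le0_ge0 // invr_ge0.
lra.
Qed.

Lemma norminf_ge0 (R : realType) k (v : 'rV[R]_k) : 0 <= norminf v.
Proof.
by apply: (big_ind (fun r => 0 <= r)) => // r1 r2 r10 _; rewrite le_max r10.
Qed.

Lemma ler_norminf (R : realType) k (v : 'rV[R]_k) i : v 0 i <= norminf v.
Proof. exact: le_trans (ler_norm _) (le_bigmax _ (fun i => `|v 0 i|) i). Qed.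

Section PenaltyReformulation.
Variables (R : realType) (n l m : nat).
Variables (f : 'I_l -> 'rV[R]_n -> R) (psi : 'rV[R]_n -> \bar R).
Variable a : 'I_m -> 'rV[R]_n -> R.

Local Notation F := (Fobj f psi).

Lemma dot_le_norminf_norm1_Abar (lam : 'rV[R]_m) x :
  nonneg_vec lam -> \sum_i lam 0 i * a i x <= norminf lam * norm1 (Abar a x).
Proof.
move=> lam0; rewrite /norm1 mulr_sumr; apply: ler_sum => i _.
have max0 : 0 <= Num.max 0 (a i x) by rewrite le_max lexx.
rewrite /Abar mxE ger0_norm //.
apply: le_trans (ler_wpM2l (lam0 i) (_ : a i x <= Num.max 0 (a i x))) _.
  by rewrite le_max lexx orbT.
by rewrite ler_wpM2r // ler_norminf.
Qed.

Lemma xibar_ge0 : (0 <= xibar f psi a)%E.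
Proof. by apply: le_ereal_inf_tmp => _ [lam _ <-]; rewrite lee_fin norminf_ge0. Qed.

Lemma xibar_approx xi e : (xibar f psi a <= xi%:E)%E -> 0 < e ->
  exists2 L, dual_opt f psi a L & norminf L < xi + e.
Proof.
move=> xi_ge e0; have : (xibar f psi a < (xi + e)%:E)%E.
  by apply: le_lt_trans xi_ge _; rewrite lte_fin ltrDl.
by move=> /ereal_inf_lt [_ [L L_opt <-]]; rewrite lte_fin; exists L.
Qed.

Lemma Fstar_le_Fobj_add_penalty lam xi x :
  nonneg_vec lam -> (Fstar f psi a <= dualfun f psi a lam)%E ->
  (xibar f psi a <= xi%:E)%E ->
  (Fstar f psi a <= F x + (xi * norm1 (Abar a x))%:E)%E.
Proof.
move=> lam0 Fstar_le xi_ge; apply/lee_addgt0Pr => e e0; rewrite -addeA -EFinD.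
set S := norm1 (Abar a x).
have S0 : 0 <= S by apply: sumr_ge0 => i _.
have [L [L0 L_opt] L_lt] := xibar_approx xi_ge (divr_gt0 e0 (ltr_wpDl S0 ltr01)).
apply: le_trans (le_trans Fstar_le (L_opt lam lam0)) _.
apply: le_trans (ereal_inf_lbound (_ : range _ (F x + (\sum_i L 0 i * a i x)%:E)%E)) _.
  by exists x.
apply: leeD2l; rewrite lee_fin.
apply: le_trans (dot_le_norminf_norm1_Abar x L0) _.
apply: le_trans (_ : (xi + e / (S + 1)) * S <= _); first by rewrite ler_wpM2r // ltW.
by rewrite mulrDl lerD2l mulrAC ler_pdivrMr ?ltr_wpDl // ler_pM2l // lerDl.
Qed.

Lemma Fstar_ge_Fpen_minimizer delta xi xs :
  0 <= delta -> 0 <= xi -> F xs \is a fin_num ->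
  (forall y, (Fpen f psi a xi delta xs <= Fpen f psi a xi delta y)%E) ->
  ((fine (F xs) - m%:R * xi * delta * ln 2)%:E <= Fstar f psi a)%E.
Proof.
move=> delta0 xi0 Fxs xs_min; apply: le_ereal_inf_tmp => _ [y y_feas <-].
set Sy := \sum_i softplus delta (a i y); set Sxs := \sum_i softplus delta (a i xs).
have Sxs0 : 0 <= xi * Sxs by rewrite mulr_ge0 // sumr_ge0 // => i _; exact: softplus_ge0.
have Sy_le : xi * Sy <= xi * (m%:R * (delta * ln 2)).
  rewrite ler_wpM2l // (_ : m%:R * _ = \sum_(i < m) delta * ln 2).
    by apply: ler_sum => i _; apply: softplus_le_ln2.
  by rewrite sumr_const card_ord mulr_natl.
have := xs_min y; rewrite /Fpen -(fineK Fxs).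
case: (F y) => [r | _ | ]; rewrite ?leey //= !lee_fin -/Sy -/Sxs => min_y.
have -> : m%:R * xi * delta * ln 2 = xi * (m%:R * (delta * ln 2)) by ring.
lra.
Qed.

Lemma Fstar_le_dualfun mu xh :
  0 <= mu -> strongly_convex_e mu F -> (forall i, convex_fun (a i)) ->
  (forall x, F x != -oo%E) -> F xh \is a fin_num -> (forall i, a i xh < 0) ->
  Fstar f psi a \is a fin_num ->
  exists2 lam, nonneg_vec lam & (Fstar f psi a <= dualfun f psi a lam)%E.
Proof.
move=> mu0 Fsc a_cvx F_ninfty Fxh axh Fstar_fin.
pose D := [set x | F x \is a fin_num].
have D_convex x y t : D x -> D y -> 0 < t < 1 -> D (t *: x + (1 - t) *: y).
  move=> Dx Dy t01; rewrite /D /= fin_numE F_ninfty -ltey.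
  exact: le_lt_trans (strongly_convex_e_le mu0 Fsc Dx Dy t01) (ltry _).
have [lam lam0 lam_lb] : exists2 lam : 'I_m -> R, forall i, 0 <= lam i &
    forall x, D x -> fine (Fstar f psi a) <= fine (F x) + \sum_i lam i * a i x.
  apply: (slater_multiplier (xh := xh)) => //.
  - move=> x y t Dx Dy t01; rewrite -lee_fin fineK; last exact: D_convex.
    exact: strongly_convex_e_le mu0 Fsc Dx Dy t01.
  - by move=> i x y t /andP[t0 t1]; apply: a_cvx; rewrite !ltW.
  - move=> x Dx x_feas; rewrite -lee_fin !fineK //.
    by apply: ereal_inf_lbound; exists x.
exists (\row_i lam i) => [i | ]; first by rewrite mxE.
rewrite -(fineK Fstar_fin); apply: le_ereal_inf_tmp => _ [x _ <-].
have [Fx | Fx_inf] := boolP (F x \is a fin_num).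
  rewrite -(fineK Fx) -EFinD lee_fin.
  by under eq_bigr do rewrite mxE; exact: lam_lb.
suff -> : F x = +oo%E by rewrite addye ?leey.
by move: Fx_inf; rewrite fin_numE F_ninfty /= => /negPn /eqP.
Qed.

End PenaltyReformulation.

Theorem proposition1 (R : realType) (n l m : nat)
  (f : 'I_l -> 'rV[R]_n -> R) (psi : 'rV[R]_n -> \bar R)
  (a : 'I_m -> 'rV[R]_n -> R)
  (grad_f : 'I_l -> 'rV[R]_n -> 'rV[R]_n) (grad_a : 'I_m -> 'rV[R]_n -> 'rV[R]_n)
  (mu Lf La : R) :
  (0 < l)%N ->
  (* (i) F is mu-strongly convex, mu >= 0 *)
  0 <= mu -> strongly_convex_e mu (Fobj f psi) ->
  (* (ii) each f_i convex and Lf-smooth *)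
  (forall i, convex_fun (f i)) ->
  (forall i, has_gradient (f i) (grad_f i)) ->
  (forall i, lipschitz_grad Lf (grad_f i)) ->
  (* (iii) psi proper, closed (lsc), convex *)
  proper_e psi -> lower_semicontinuous psi -> convex_e psi ->
  (* (iv) each a_i convex and La-smooth *)
  (forall i, convex_fun (a i)) ->
  (forall i, has_gradient (a i) (grad_a i)) ->
  (forall i, lipschitz_grad La (grad_a i)) ->
  (* (v) Slater *)
  (exists (s : R) (xhat : 'rV[R]_n),
      0 < s /\ (psi xhat < +oo)%E /\ forall i, a i xhat <= - s) ->
  (* (vi) gradient growth *)
  (exists C0 C1 : R, 0 < C0 /\ 0 <= C1 /\
      forall i x, norm2 (grad_a i x) ^+ 2 <= C0 + C1 * `|a i x|) ->
  forall (delta xi : R) (xstar : 'rV[R]_n),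
    0 <= delta ->
    ((xibar f psi a < xi%:E)%E \/ (0 < mu /\ xi%:E = xibar f psi a)) ->
    (forall y, (Fpen f psi a xi delta xstar <= Fpen f psi a xi delta y)%E) ->
    (- (xi * norm1 (Abar a xstar))%:E <= Fobj f psi xstar - Fstar f psi a)%E /\
    (Fobj f psi xstar - Fstar f psi a <= (m%:R * xi * delta * ln 2)%:E)%E.
Proof.
move=> _ mu0 Fsc _ _ _ [psi_ninfty _] _ _ a_cvx _ _ [s [xh [s0 [psi_xh axh]]]] _
  delta xi xs delta0 xi_gt xs_min.
have F_ninfty x : Fobj f psi x != -oo%E by rewrite /Fobj; case: (psi x) (psi_ninfty x).
have Fxh : Fobj f psi xh \is a fin_num.
  by rewrite fin_numD /= fin_numE psi_ninfty -ltey psi_xh.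
have axh_lt0 i : a i xh < 0 by rewrite (le_lt_trans (axh i)) // oppr_lt0.
(* Only xi >= xibar is used, so the case xi = xibar needs no strong convexity. *)
have xibar_le : (xibar f psi a <= xi%:E)%E by case: xi_gt => [/ltW | [_ ->]].
have xi0 : 0 <= xi by rewrite -lee_fin (le_trans (xibar_ge0 f psi a) xibar_le).
have Fxs : Fobj f psi xs \is a fin_num.
  have : Fpen f psi a xi delta xs \is a fin_num.
    rewrite fin_numElt {1}/Fpen ltNye adde_eq_ninfty negb_or F_ninfty /=.
    by apply: le_lt_trans (xs_min xh) _; rewrite ltey_eq /Fpen fin_numD Fxh.
  by rewrite fin_numD => /andP[].
have Fstar_lb := Fstar_ge_Fpen_minimizer delta0 xi0 Fxs xs_min.
have Fstar_ub : (Fstar f psi a <= Fobj f psi xh)%E.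
  by apply: ereal_inf_lbound; exists xh => // i; exact: ltW.
have Fstar_fin : Fstar f psi a \is a fin_num.
  rewrite fin_numElt (lt_le_trans (ltNyr _) Fstar_lb) /=.
  by rewrite (le_lt_trans Fstar_ub) // ltey_eq Fxh.
have [lam lam0 strong] := Fstar_le_dualfun mu0 Fsc a_cvx F_ninfty Fxh axh_lt0 Fstar_fin.
have := Fstar_le_Fobj_add_penalty xs lam0 strong xibar_le.
move: Fstar_lb; rewrite -(fineK Fxs) -(fineK Fstar_fin) -EFinD -EFinN -EFinB !lee_fin.
lra.
Qed.
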